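(* Let $X=(X,a)$ be a $\mathsf V$-category, $M\subseteq X$ with full embedding $m:M\hookrightarrow X$, and $x\in X$ (also regarded as the $\mathsf V$-functor $x:E\to X$). The following are equivalent: (i) $x\in\overline M$; (ii) $a(x,x)\le\bigvee_{y\in M}a(x,y)\otimes a(y,x)$; (iii) $k\le\bigvee_{y\in M}a(x,y)\otimes a(y,x)$; (iv) $1_E^*\le x^*\cdot m_*\cdot m^*\cdot x_*$; (v) $m^*\cdot x_*\dashv x^*\cdot m_*$; (vi) $x_*:E\to X$ factors as $x_*=m_*\cdot\varphi$ for some $\mathsf V$-module $\varphi:E\to M$.
   Context: Let $\mathsf V=(\mathsf V,\otimes,k)$ be a commutative unital quantale (complete lattice with commutative associative $\otimes$, neutral element $k$, $u\otimes(-)$ preserving suprema). A $\mathsf V$-category $(X,a)$ is a set with $a:X\times X\to\mathsf V$, $k\le a(x,x)$, $a(x,y)\otimes a(y,z)\le a(x,z)$; a $\mathsf V$-functor $f:(X,a)\to(Y,b)$ satisfies $a(x,y)\le b(f(x),f(y))$; subsets carry the restricted structure. For points, $u\cong v$ in $(Y,b)$ means $k\le b(u,v)$ and $k\le b(v,u)$. The L-closure of $M\subseteq X$ is $\overline M=\{x\in X\mid$ for all $\mathsf V$-functors $f,g:X\to Y$ with $f|_M=g|_M$ one has $f(x)\cong g(x)\}$. $E=(\{\star\},k)$. A $\mathsf V$-relation from $X$ to $Y$ is a map $X\times Y\to\mathsf V$, composed by $(s\cdot r)(x,z)=\bigvee_y r(x,y)\otimes s(y,z)$, ordered pointwise. A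 $\mathsf V$-module $\varphi:(X,a)\to(Y,b)$ is a $\mathsf V$-relation with $\varphi\cdot a\le\varphi$ and $b\cdot\varphi\le\varphi$; the identity module on $X$ is $1_X^*=a$. For a $\mathsf V$-functor $f:Z\to X$, $f_*(z,x)=a(f(z),x)$ and $f^*(x,z)=a(x,f(z))$. For modules $\varphi:A\to B$, $\psi:B\to A$, $\varphi\dashv\psi$ means $1_A^*\le\psi\cdot\varphi$ and $\varphi\cdot\psi\le 1_B^*$. *)

Record quantale := Quantale {
  qcar :> Type;
  qle : qcar -> qcar -> Prop;
  qsup : (qcar -> Prop) -> qcar;
  qtens : qcar -> qcar -> qcar;
  qk : qcar;
  qle_refl : forall u, qle u u;
  qle_trans : forall u v w, qle u v -> qle v w -> qle u w;
  qle_antisym : forall u v, qle u v -> qle v u -> u = v;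
  qsup_ub : forall (S : qcar -> Prop) u, S u -> qle u (qsup S);
  qsup_least : forall (S : qcar -> Prop) u,
      (forall v, S v -> qle v u) -> qle (qsup S) u;
  qtensC : forall u v, qtens u v = qtens v u;
  qtensA : forall u v w, qtens u (qtens v w) = qtens (qtens u v) w;
  qtens1 : forall u, qtens qk u = u;
  qtens_sup : forall u (S : qcar -> Prop),
      qtens u (qsup S) = qsup (fun w => exists v, S v /\ w = qtens u v)
}.

Arguments qle {q}.
Arguments qsup {q}.
Arguments qtens {q}.
Arguments qk {q}.

Definition qbig {V : quantale} {I : Type} (f : I -> V) : V :=
  qsup (fun v => exists i, v = f i).

Record vcat (V : quantale) := VCat {
  vobj :> Type;
  vhom : vobj -> vobj -> V;
  vhom_refl : forall x, qle qk (vhom x x);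
  vhom_trans : forall x y z, qle (qtens (vhom x y) (vhom y z)) (vhom x z)
}.

Arguments vhom {V} _ _ _.
Arguments vhom_refl {V} _ _.
Arguments vhom_trans {V} _ _ _ _.
Arguments VCat {V} _ _ _ _.

Definition vfunctor {V : quantale} {X Y : vcat V} (f : X -> Y) : Prop :=
  forall x y, qle (vhom X x y) (vhom Y (f x) (f y)).

Definition viso {V : quantale} (Y : vcat V) (u v : Y) : Prop :=
  qle qk (vhom Y u v) /\ qle qk (vhom Y v u).

Definition subcat {V : quantale} (X : vcat V) (M : X -> Prop) : vcat V :=
  @VCat V {y : X | M y}
    (fun y z => vhom X (proj1_sig y) (proj1_sig z))
    (fun y => vhom_refl X (proj1_sig y))
    (fun y z w => vhom_trans X (proj1_sig y) (proj1_sig z) (proj1_sig w)).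


Definition incl {V : quantale} {X : vcat V} (M : X -> Prop) :
  subcat X M -> X := fun y => proj1_sig y.

Definition Ecat (V : quantale) : vcat V :=
  @VCat V unit (fun _ _ => qk)
    (fun _ => qle_refl V qk)
    (fun _ _ _ => eq_ind_r (fun t => qle t qk) (qle_refl V qk) (qtens1 V qk)).

Definition Lclosure {V : quantale} {X : vcat V} (M : X -> Prop) (x : X) : Prop :=
  forall (Y : vcat V) (f g : X -> Y), vfunctor f -> vfunctor g ->
    (forall y, M y -> f y = g y) -> viso Y (f x) (g x).

Definition vrel (V : quantale) (A B : Type) := A -> B -> V.

Definition rcomp {V : quantale} {A B C : Type} (s : vrel V B C) (r : vrel V A B)
  : vrel V A C :=
  fun x z => qbig (fun y : B => qtens (r x y) (s y z)).

Definition rle {V : quantale} {A B : Type} (r s : vrel V A B) : Prop :=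
  forall x y, qle (r x y) (s x y).

Definition vmodule {V : quantale} {X Y : vcat V} (phi : vrel V X Y) : Prop :=
  rle (rcomp phi (vhom X)) phi /\ rle (rcomp (vhom Y) phi) phi.

Definition idmod {V : quantale} (X : vcat V) : vrel V X X := vhom X.

(** f_* (z,x) = a(f z, x) and f^* (x,z) = a(x, f z) for f : Z -> X *)
Definition lower {V : quantale} {Z : Type} {X : vcat V} (f : Z -> X) : vrel V Z X :=
  fun z x => vhom X (f z) x.
Definition upper {V : quantale} {Z : Type} {X : vcat V} (f : Z -> X) : vrel V X Z :=
  fun x z => vhom X x (f z).

Definition madj {V : quantale} {A B : vcat V} (phi : vrel V A B) (psi : vrel V B A)
  : Prop :=
  rle (idmod A) (rcomp psi phi) /\ rle (rcomp phi psi) (idmod B).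

(* If x is in the L-closure, compare the two V-functors X -> Y that send z to
   its copy in the first, resp. (for z outside M) the second summand of the
   amalgam Y of two copies of X glued along M, whose hom between the copies is
   the "hom through M", t(u, v) = sup_{y in M} a(u,y) (x) a(y,v), i.e. the
   module composite m_* . m^* .  The two functors agree on M, so their values
   at x are isomorphic, which for x outside M says exactly k <= t(x, x).  All
   other conditions are rewritings of this one, since t(x, -) = a(x, -) as soon
   as k <= t(x, x). *)

From Stdlib Require Import ClassicalEpsilon FunctionalExtensionality.

#[local] Arguments qle_refl {q} u.
#[local] Arguments qle_trans {q} u v w.
#[local] Arguments qle_antisym {q} u v.
#[local] Arguments qtensC {q} u v.
#[local] Arguments qtensA {q} u v w.
#[local] Arguments qtens1 {q} u.

Section QuantaleFacts.
Variable V : quantale.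

Lemma qbig_ub {I : Type} (f : I -> V) (i : I) : qle (f i) (qbig f).
Proof. apply qsup_ub; eauto. Qed.

Lemma qbig_least {I : Type} (f : I -> V) (u : V) :
  (forall i, qle (f i) u) -> qle (qbig f) u.
Proof. intros H; apply qsup_least; intros v [i ->]; auto. Qed.

Lemma qbig_mono {I : Type} (f g : I -> V) :
  (forall i, qle (f i) (g i)) -> qle (qbig f) (qbig g).
Proof.
  intros H; apply qbig_least; intros i.
  apply (qle_trans _ (g i)); [apply H | apply qbig_ub].
Qed.

Lemma qtens_bigr (u : V) {I : Type} (f : I -> V) :
  qtens u (qbig f) = qbig (fun i => qtens u (f i)).
Proof.
  unfold qbig; rewrite qtens_sup; apply qle_antisym.
  - apply qsup_least; intros w [v [[i ->] ->]]; apply qsup_ub; eauto.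
  - apply qsup_least; intros w [i ->]; apply qsup_ub; eauto.
Qed.

Lemma qtens_bigl (u : V) {I : Type} (f : I -> V) :
  qtens (qbig f) u = qbig (fun i => qtens (f i) u).
Proof.
  rewrite qtensC, qtens_bigr; f_equal.
  extensionality i; apply qtensC.
Qed.

Lemma qbig_comm {I J : Type} (f : I -> J -> V) :
  qbig (fun i => qbig (fun j => f i j)) = qbig (fun j => qbig (fun i => f i j)).
Proof.
  apply qle_antisym.
  - apply qbig_least; intros i; apply qbig_least; intros j.
    apply (qle_trans _ (qbig (fun i' => f i' j)));
      [apply (qbig_ub (fun i' => f i' j)) | apply (qbig_ub (fun j' => qbig (fun i' => f i' j')))].
  - apply qbig_least; intros j; apply qbig_least; intros i.
    apply (qle_trans _ (qbig (fun j' => f i j')));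
      [apply (qbig_ub (fun j' => f i j')) | apply (qbig_ub (fun i' => qbig (fun j' => f i' j')))].
Qed.

(* Monotonicity comes from preservation of the supremum of {v, v'}. *)
Lemma qtens_monor (u v v' : V) : qle v v' -> qle (qtens u v) (qtens u v').
Proof.
  intros H.
  assert (Hsup : qsup (fun w => w = v \/ w = v') = v').
  { apply qle_antisym.
    - apply qsup_least; intros w [-> | ->]; [exact H | apply qle_refl].
    - apply qsup_ub; auto. }
  rewrite <- Hsup, qtens_sup; apply qsup_ub; eauto.
Qed.

Lemma qtens_mono (u u' v v' : V) :
  qle u u' -> qle v v' -> qle (qtens u v) (qtens u' v').
Proof.
  intros Hu Hv; apply (qle_trans _ (qtens u v')); [now apply qtens_monor|].
  rewrite (qtensC u), (qtensC u'); now apply qtens_monor.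
Qed.

Lemma qtens1r (u : V) : qtens u qk = u.
Proof. rewrite qtensC; apply qtens1. Qed.

Lemma rcomp_assoc {A B C D : Type} (t : vrel V C D) (s : vrel V B C)
    (r : vrel V A B) :
  rcomp t (rcomp s r) = rcomp (rcomp t s) r.
Proof.
  extensionality a; extensionality d; unfold rcomp.
  transitivity (qbig (fun c => qbig (fun b => qtens (qtens (r a b) (s b c)) (t c d)))).
  - f_equal; extensionality c; apply qtens_bigl.
  - rewrite qbig_comm; f_equal; extensionality b.
    rewrite qtens_bigr; f_equal; extensionality c; symmetry; apply qtensA.
Qed.

End QuantaleFacts.

Section VCategoryFacts.
Variables (V : quantale) (X : vcat V).

Lemma qle_tens_homr (u : V) (z : X) : qle u (qtens u (vhom X z z)).
Proof.
  rewrite <- (qtens1r _ u) at 1.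
  apply qtens_mono; [apply qle_refl | apply vhom_refl].
Qed.

Lemma qle_tens_homl (u : V) (z : X) : qle u (qtens (vhom X z z) u).
Proof. rewrite qtensC; apply qle_tens_homr. Qed.

Lemma qbig_hom_tens_hom (u v : X) :
  qbig (fun w => qtens (vhom X u w) (vhom X w v)) = vhom X u v.
Proof.
  apply qle_antisym.
  - apply qbig_least; intros w; apply vhom_trans.
  - apply (qle_trans _ (qtens (vhom X u v) (vhom X v v))).
    + apply qle_tens_homr.
    + apply (qbig_ub _ (fun w => qtens (vhom X u w) (vhom X w v))).
Qed.

Lemma upper_comp_lower {Z W : Type} (f : Z -> X) (g : W -> X) :
  rcomp (upper g) (lower f) = fun z w => vhom X (f z) (g w).
Proof.
  extensionality z; extensionality w; apply qbig_hom_tens_hom.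
Qed.

End VCategoryFacts.

Section HomThroughM.
Variables (V : quantale) (X : vcat V) (M : X -> Prop).

Local Notation m := (incl M).
Local Notation thru := (rcomp (lower m) (upper m)).

Lemma thru_le_hom (u v : X) : qle (thru u v) (vhom X u v).
Proof. apply qbig_least; intros y; apply vhom_trans. Qed.

Lemma hom_tens_thru_le (u v w : X) : qle (qtens (vhom X u v) (thru v w)) (thru u w).
Proof.
  unfold rcomp; rewrite qtens_bigr; apply qbig_mono; intros y.
  rewrite qtensA; apply qtens_mono; [apply vhom_trans | apply qle_refl].
Qed.

Lemma thru_tens_hom_le (u v w : X) : qle (qtens (thru u v) (vhom X v w)) (thru u w).
Proof.
  unfold rcomp; rewrite qtens_bigl; apply qbig_mono; intros y.
  rewrite <- qtensA; apply qtens_mono; [apply qle_refl | apply vhom_trans].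
Qed.

Lemma thru_tens_thru_le (u v w : X) : qle (qtens (thru u v) (thru v w)) (vhom X u w).
Proof.
  apply (qle_trans _ (qtens (vhom X u v) (vhom X v w))); [|apply vhom_trans].
  apply qtens_mono; apply thru_le_hom.
Qed.

Lemma hom_le_thru_l (u v : X) : M u -> qle (vhom X u v) (thru u v).
Proof.
  intros Hu; apply (qle_trans _ (qtens (vhom X u u) (vhom X u v))).
  - apply qle_tens_homl.
  - exact (qbig_ub _ (fun y : subcat X M => _) (exist M u Hu)).
Qed.

Lemma hom_le_thru_r (u v : X) : M v -> qle (vhom X u v) (thru u v).
Proof.
  intros Hv; apply (qle_trans _ (qtens (vhom X u v) (vhom X v v))).
  - apply qle_tens_homr.
  - exact (qbig_ub _ (fun y : subcat X M => _) (exist M v Hv)).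
Qed.

Lemma thru_eq_hom (x z : X) : qle qk (thru x x) -> thru x z = vhom X x z.
Proof.
  intros Hx; apply qle_antisym; [apply thru_le_hom|].
  apply (qle_trans _ (qtens (thru x x) (vhom X x z))); [|apply thru_tens_hom_le].
  rewrite <- (qtens1 (vhom X x z)) at 1.
  apply qtens_mono; [exact Hx | apply qle_refl].
Qed.

Lemma hom_le_thru_iff_unit_le_thru (x : X) :
  qle (vhom X x x) (thru x x) <-> qle qk (thru x x).
Proof.
  split; intros H.
  - exact (qle_trans _ _ _ (vhom_refl X x) H).
  - rewrite (thru_eq_hom x x H); apply qle_refl.
Qed.

(* Two copies of X, glued along M: objects (z, b) with b selecting the copy. *)
Definition amalgam_hom (p q : X * bool) : V :=
  if Bool.eqb (snd p) (snd q) then vhom X (fst p) (fst q) else thru (fst p) (fst q).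

Lemma amalgam_hom_refl (p : X * bool) : qle qk (amalgam_hom p p).
Proof. destruct p as [u []]; apply vhom_refl. Qed.

Lemma amalgam_hom_trans (p q r : X * bool) :
  qle (qtens (amalgam_hom p q) (amalgam_hom q r)) (amalgam_hom p r).
Proof.
  destruct p as [u []], q as [v []], r as [w []]; unfold amalgam_hom; simpl;
    first [ apply vhom_trans | apply hom_tens_thru_le
          | apply thru_tens_hom_le | apply thru_tens_thru_le ].
Qed.

Definition amalgam : vcat V := VCat (X * bool) amalgam_hom amalgam_hom_refl amalgam_hom_trans.

Definition amalgam_inl (z : X) : amalgam := (z, false).

Definition amalgam_split (z : X) : amalgam :=
  (z, if excluded_middle_informative (M z) then false else true).

Lemma amalgam_inl_vfunctor : vfunctor amalgam_inl.
Proof. intros z w; apply qle_refl. Qed.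

Lemma amalgam_split_vfunctor : vfunctor amalgam_split.
Proof.
  intros z w; cbn; unfold amalgam_hom; simpl.
  destruct (excluded_middle_informative (M z)) as [Hz|Hz],
           (excluded_middle_informative (M w)) as [Hw|Hw]; simpl;
    first [ apply qle_refl | now apply hom_le_thru_l | now apply hom_le_thru_r ].
Qed.

Lemma Lclosure_unit_le_thru (x : X) : Lclosure M x -> qle qk (thru x x).
Proof.
  intros Hcl; destruct (excluded_middle_informative (M x)) as [Hx|Hx].
  - exact (qle_trans _ _ _ (vhom_refl X x) (hom_le_thru_l x x Hx)).
  - destruct (Hcl amalgam amalgam_inl amalgam_split
                amalgam_inl_vfunctor amalgam_split_vfunctor) as [Hiso _].
    + intros y Hy; unfold amalgam_inl, amalgam_split.
      now destruct (excluded_middle_informative (M y)).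
    + cbn in Hiso; unfold amalgam_hom in Hiso; simpl in Hiso.
      now destruct (excluded_middle_informative (M x)).
Qed.

Lemma unit_le_thru_Lclosure (x : X) : qle qk (thru x x) -> Lclosure M x.
Proof.
  intros Hx Y f g Hf Hg Hfg.
  assert (Hiso : forall (h h' : X -> Y), vfunctor h -> vfunctor h' ->
            (forall y, M y -> h y = h' y) -> qle qk (vhom Y (h x) (h' x))).
  { intros h h' Hh Hh' Hhh'; apply (qle_trans _ _ _ Hx).
    apply qbig_least; intros [y Hy]; cbn.
    apply (qle_trans _ (qtens (vhom Y (h x) (h y)) (vhom Y (h' y) (h' x)))).
    - apply qtens_mono; [apply Hh | apply Hh'].
    - rewrite (Hhh' y Hy); apply vhom_trans. }
  split; apply Hiso; auto.
  intros y Hy; symmetry; auto.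
Qed.

Lemma lower_point_factors_iff (x : X) :
  (exists phi : vrel V (Ecat V) (subcat X M),
      vmodule phi /\ lower (fun _ : Ecat V => x) = rcomp (lower m) phi)
  <-> qle qk (thru x x).
Proof.
  split.
  - intros [phi [_ Hphi]].
    assert (Hphi_le : forall y, qle (phi tt y) (vhom X x (m y))).
    { intros y; change (vhom X x (m y)) with (lower (fun _ : Ecat V => x) tt (m y)).
      rewrite Hphi; apply (qle_trans _ (qtens (phi tt y) (vhom X (m y) (m y)))).
      - apply qle_tens_homr.
      - exact (qbig_ub _ (fun y' => qtens (phi tt y') (vhom X (m y') (m y))) y). }
    apply (qle_trans _ _ _ (vhom_refl X x)).
    change (vhom X x x) with (lower (fun _ : Ecat V => x) tt x); rewrite Hphi.
    apply qbig_mono; intros y; apply qtens_mono; [apply Hphi_le | apply qle_refl].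
  - intros Hx; exists (fun _ y => vhom X x (m y)); split; [split|].
    + intros e y; apply qbig_least; intros e'; cbn; rewrite qtens1; apply qle_refl.
    + intros e y; apply qbig_least; intros y'; exact (vhom_trans X x (m y') (m y)).
    + extensionality e; extensionality z; symmetry; exact (thru_eq_hom x z Hx).
Qed.

End HomThroughM.

Theorem mainTheorem6 (V : quantale) (X : vcat V) (M : X -> Prop) (x : X) :
  let Mc := subcat X M in
  let m : Mc -> X := incl M in
  let xE : Ecat V -> X := fun _ => x in
  let xs := lower xE in
  let xu := upper xE in
  let ms := lower m in
  let mu := upper m in
  let i := Lclosure M x in
  let ii := qle (vhom X x x)
              (qbig (fun y : Mc => qtens (vhom X x (m y)) (vhom X (m y) x))) in
  let iii := qle qk
              (qbig (fun y : Mc => qtens (vhom X x (m y)) (vhom X (m y) x))) in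
  let iv := rle (idmod (Ecat V)) (rcomp xu (rcomp ms (rcomp mu xs))) in
  let v := @madj V (Ecat V) Mc (rcomp mu xs) (rcomp xu ms) in
  let vi := exists phi : vrel V (Ecat V) Mc,
              vmodule phi /\ xs = rcomp ms phi in
  (i <-> ii) /\ (i <-> iii) /\ (i <-> iv) /\ (i <-> v) /\ (i <-> vi).
Proof.
  intros Mc m xE xs xu ms mu i ii iii iv v vi.
  assert (Hmx : rcomp mu xs = fun _ y => vhom X x (m y)) by apply upper_comp_lower.
  assert (Hxm : rcomp xu ms = fun y _ => vhom X (m y) x) by apply upper_comp_lower.
  assert (Hi : i <-> iii)
    by (split; [apply Lclosure_unit_le_thru | apply unit_le_thru_Lclosure]).
  assert (Hii : ii <-> iii) by apply hom_le_thru_iff_unit_le_thru.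
  assert (Hiv : iv <-> iii).
  { unfold iv; rewrite rcomp_assoc, Hxm, Hmx.
    split; [intros H; exact (H tt tt) | intros H [] []; exact H]. }
  assert (Hv : v <-> iii).
  { unfold v, madj; rewrite Hxm, Hmx; split.
    - intros [H _]; exact (H tt tt).
    - intros H; split; [intros [] []; exact H|].
      intros y y'; apply qbig_least; intros _; exact (vhom_trans X (m y) x (m y')). }
  assert (Hvi : vi <-> iii) by apply lower_point_factors_iff.
  clearbody i ii iii iv v vi; tauto.
Qed.
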